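(* Let $\lambda_N^1=\max(\lambda_{\max}(L_1),\lambda_{\max}(L_2))$ be the greatest of the largest Laplacian eigenvalues of the two layers. For $c\ge0$ define $$H(c)=\min_{w\ge0,\ w^T\boldsymbol 1=c}\ \big(\lambda_n[L(w)]-\lambda_2[L(w)]\big).$$ Then $H(c)\ge\lambda_N^1-\frac{2c}{N}$ for all $c\ge0$, and the inequality is strict for $c\neq0$.
   Context: A multiplex network consists of two layers $G_1,G_2$, simple undirected graphs on $N$ vertices each with Laplacians $L_1,L_2\in\mathbb{R}^{N\times N}$; the $i$-th vertex of $G_1$ is joined by an interlayer edge of weight $w_i\ge0$ to the $i$-th vertex of $G_2$. With $W=\operatorname{diag}(w)$ the multiplex Laplacian is $L(w)=\begin{bmatrix}L_1+W&-W\\-W&L_2+W\end{bmatrix}\in\mathbb{R}^{2N\times 2N}$, with eigenvalues $0=\lambda_1\le\lambda_2\le\dots\le\lambda_n$, $n=2N$. $\boldsymbol 1$ is the all-ones vector. *)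

From HB Require Import structures.
From mathcomp Require Import all_boot all_order all_algebra.
From mathcomp Require Import boolp classical_sets reals.
Set Implicit Arguments. Unset Strict Implicit. Unset Printing Implicit Defensive.
Import Order.TTheory GRing.Theory Num.Theory.
Local Open Scope ring_scope.

Definition simple_graph (N : nat) (e : rel 'I_N) : Prop :=
  (forall i j, e i j = e j i) /\ (forall i, e i i = false).

Definition laplacian (R : realType) (N : nat) (e : rel 'I_N) : 'M[R]_N :=
  \matrix_(i, j) (if i == j then (#|[set k | e i k]|)%:R
                  else if e i j then -1 else 0).

Definition multiplex_laplacian (R : realType) (N : nat) (L1 L2 : 'M[R]_N)
  (w : 'rV[R]_N) : 'M[R]_(N + N) :=
  block_mx (L1 + diag_mx w) (- diag_mx w) (- diag_mx w) (L2 + diag_mx w).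

Definition is_spectrum (R : realType) (n : nat) (A : 'M[R]_n) (s : seq R) :=
  sorted <=%R s /\ char_poly A = \prod_(x <- s) ('X - x%:P).

(* The sorted spectrum (well defined for real symmetric matrices, whose
   characteristic polynomial splits over R; [::] otherwise). *)
Definition spectrum (R : realType) (n : nat) (A : 'M[R]_n) : seq R :=
  match pselect (exists s, is_spectrum A s) with
  | left e => projT1 (cid e)
  | right _ => [::]
  end.

(* lambda_k(A), 1-indexed: lambda_1 <= lambda_2 <= ... <= lambda_n. *)
Definition eig (R : realType) (n : nat) (A : 'M[R]_n) (k : nat) : R :=
  nth 0 (spectrum A) k.-1.

Definition eig_max (R : realType) (n : nat) (A : 'M[R]_n) : R := eig A n.

(* H(c) = min over w >= 0, w^T 1 = c of lambda_n[L(w)] - lambda_2[L(w)]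
   (taken as the infimum of the set of attained values). *)
Definition Hmin (R : realType) (N : nat) (L1 L2 : 'M[R]_N) (c : R) : R :=
  inf [set (eig (multiplex_laplacian L1 L2 w) (N + N)
            - eig (multiplex_laplacian L1 L2 w) 2)
      | w in [set w : 'rV[R]_N | (forall i, 0 <= w 0 i) /\ \sum_i w 0 i = c]].

From HB Require Import structures.
From mathcomp Require Import all_boot all_order all_algebra.
From mathcomp Require Import boolp classical_sets reals.
From mathcomp Require Import complex spectral sesquilinear ring lra.
Import Order.TTheory GRing.Theory Num.Theory.
Set Implicit Arguments. Unset Strict Implicit. Unset Printing Implicit Defensive.
Local Open Scope ring_scope.
Local Open Scope sesquilinear_scope.

(* Let w be admissible and a = c/N. Testing the Rayleigh quotient of L(w) on
   (v, 0) and (0, v), with v a top eigenvector of L1 or L2, gives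
   lambda_n >= lambda^1_N + min_i w_i. Vectors (u, -u) are orthogonal to 1,
   the eigenvector of lambda_1 = 0, so they bound lambda_2 from above; u = 1
   gives lambda_2 <= 2a. If every w_i >= a/2 this leaves a margin a/2.
   Otherwise some w_j < a/2, and u = 1 + t e_j with t = a/N improves the bound
   to lambda_2 <= 2a - a t / (N + 2t + t^2). The margin does not depend on w,
   so it survives the infimum and makes the inequality strict for c > 0.
   The spectral facts about real symmetric matrices are obtained from the
   complex spectral theorem. *)

Lemma char_poly_conj (F : fieldType) n (P Q D : 'M[F]_n) :
  Q *m P = 1%:M -> char_poly (Q *m D *m P) = char_poly D.
Proof.
move=> QP; have QPX : map_mx polyC Q *m map_mx polyC P = 1%:M.
  by rewrite -map_mxM QP map_mx1.
have XE : ('X%:M : 'M[{poly F}]_n) = map_mx polyC Q *m 'X%:M *m map_mx polyC P.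
  by rewrite scalar_mxC -mulmxA QPX mulmx1.
rewrite /char_poly /char_poly_mx !map_mxM {1}XE -mulmxBl -mulmxBr !det_mulmx.
by rewrite -mulrA mulrCA -det_mulmx QPX det1 mulr1.
Qed.

Section ConjugateForms.
Variables (C : numClosedFieldType) (n : nat) (P : 'M[C]_n).

Lemma cform_diag (d u v : 'rV[C]_n) :
  (u *m (P^t* *m diag_mx d *m P) *m v^t*) 0 0 =
  \sum_i (u *m P^t*) 0 i * d 0 i * ((v *m P^t*) 0 i)^*.
Proof.
have -> : u *m (P^t* *m diag_mx d *m P) *m v^t* =
    (u *m P^t*) *m diag_mx d *m (v *m P^t*)^t*.
  by rewrite trmx_mul map_mxM trmxCK !mulmxA.
by rewrite mul_mx_diag mxE; apply: eq_bigr => i _; rewrite !mxE.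
Qed.

Lemma cdot_unitary (u v : 'rV[C]_n) : P^t* *m P = 1%:M ->
  (u *m v^t*) 0 0 = \sum_i (u *m P^t*) 0 i * ((v *m P^t*) 0 i)^*.
Proof.
move=> PP; have := cform_diag (const_mx 1) u v.
rewrite diag_const_mx mulmx1 PP mulmx1 => ->.
by apply: eq_bigr => i _; rewrite [const_mx 1 0 i]mxE mulr1.
Qed.

End ConjugateForms.

Section Sorted.
Variable R : realDomainType.

Lemma le_nth_last (s : seq R) x : sorted <=%R s -> x \in s ->
  x <= nth 0 s (size s).-1.
Proof.
move=> s_sorted xs; rewrite -(nth_index 0 xs).
have ix := index_mem x s; rewrite xs in ix.
apply: (sorted_leq_nth le_trans lexx 0 s_sorted); rewrite ?inE //.
- by rewrite prednK // (leq_ltn_trans _ ix).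
- by rewrite -ltnS prednK // (leq_ltn_trans _ ix).
Qed.

Lemma count_lt_nth1 (s : seq R) : sorted <=%R s ->
  (count (fun x : R => (x < nth 0 s 1)%R) s <= 1)%N.
Proof.
case: s => [|a [|b t]] //=; first by case: (a < 0).
move=> /andP[_ path_bt]; rewrite ltxx add0n.
have /allP b_le := order_path_min le_trans path_bt.
have -> : count (fun x : R => x < b) t = 0%N.
  apply/eqP; rewrite -leqn0 leqNgt -has_count.
  by apply/hasPn => y /b_le; rewrite leNgt.
by rewrite addn0; case: (a < b).
Qed.

End Sorted.

Section RealSymmetric.
Variable R : realType.
Local Notation toC := (real_complex R).

Lemma realC_conjtr m n (x : 'M[R]_(m, n)) : (map_mx toC x)^t* = map_mx toC x^T.
Proof. by apply/matrixP => i j; rewrite !mxE conj_Creal ?complex_real. Qed.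

Lemma realC_form m n (u : 'rV[R]_m) (B : 'M[R]_(m, n)) (v : 'rV[R]_n) :
  toC ((u *m B *m v^T) 0 0) =
  (map_mx toC u *m map_mx toC B *m (map_mx toC v)^t*) 0 0.
Proof. by rewrite realC_conjtr -!map_mxM [RHS]mxE. Qed.

Lemma realC_dot n (u v : 'rV[R]_n) :
  toC ((u *m v^T) 0 0) = (map_mx toC u *m (map_mx toC v)^t*) 0 0.
Proof. by rewrite realC_conjtr -!map_mxM [RHS]mxE. Qed.

Lemma symmx_spectral n (A : 'M[R]_n) : A^T = A ->
  exists (P : 'M[R[i]]_n) (r : 'rV[R]_n),
   [/\ P^t* *m P = 1%:M,
       map_mx toC A = P^t* *m diag_mx (map_mx toC r) *m P &
       char_poly A = \prod_i ('X - (r 0 i)%:P)].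
Proof.
move=> symA; set Ac := map_mx toC A.
have hermA : Ac \is hermsymmx.
  apply: realsym_hermsym; last by apply/mxOverP => i j; rewrite mxE complex_real.
  apply/is_hermitianmxP; rewrite expr0 scale1r (@map_mx_id _ _ _ idfun) //.
  by rewrite /Ac map_trmx symA.
set P := spectralmx Ac; set d := spectral_diag Ac.
have PP : P^t* *m P = 1%:M by apply: mulmx1C; apply/unitarymxP/spectral_unitarymx.
have d_real : map_mx toC (map_mx (@complex.Re R) d) = d.
  apply/matrixP => i j; rewrite !mxE /= complexRe.
  exact/Creal_ReP/(mxOverP (hermitian_spectral_diag_real hermA)).
have EA : Ac = P^t* *m diag_mx d *m P.
  rewrite -invmx_unitary ?spectral_unitarymx //.
  exact/orthomx_spectralP/hermitian_normalmx.
exists P, (map_mx (@complex.Re R) d); split; rewrite ?d_real //.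
apply: (@map_poly_inj _ _ toC).
rewrite map_char_poly -/Ac EA char_poly_conj //.
rewrite char_poly_trig ?diag_mx_is_trig //.
rewrite rmorph_prod; apply: eq_bigr => i _.
rewrite !mxE eqxx mulr1n rmorphB /= map_polyX map_polyC /=.
by have /matrixP/(_ 0 i) := d_real; rewrite !mxE => ->.
Qed.

End RealSymmetric.

Lemma spectrum_split (R : realType) n (A : 'M[R]_n) (s : seq R) :
  char_poly A = \prod_(x <- s) ('X - x%:P) ->
  is_spectrum A (spectrum A) /\ perm_eq (spectrum A) s.
Proof.
move=> charA; have specA : is_spectrum A (spectrum A).
  rewrite /spectrum; case: pselect => [e|]; first exact: projT2 (cid e).
  case; exists (sort <=%R s); split; first exact/sort_sorted/le_total.
  by rewrite (perm_big _ (permEl (perm_sort _ _))).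
by split=> //; apply: prod_XsubC_eq; case: specA => _ <-.
Qed.

Section DotProduct.
Variables (R : realDomainType) (n : nat).

Lemma dot_ge0 (x : 'rV[R]_n) : 0 <= (x *m x^T) 0 0.
Proof. by rewrite mxE; apply: sumr_ge0 => i _; rewrite mxE -expr2 sqr_ge0. Qed.

Lemma dot_gt0 (x : 'rV[R]_n) : x != 0 -> 0 < (x *m x^T) 0 0.
Proof.
move=> x_neq0; rewrite lt_def dot_ge0 andbT; apply: contra x_neq0 => /eqP x0.
have sq_ge0 k : true -> 0 <= x 0 k * x^T k 0 by rewrite mxE -expr2 sqr_ge0.
apply/eqP/matrixP => i j; rewrite ord1 [RHS]mxE; move: x0; rewrite mxE => x0.
have /eqP := @psumr_eq0P _ _ _ _ sq_ge0 x0 j isT.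
by rewrite mxE mulf_eq0 orbb => /eqP.
Qed.

Lemma dot_row_mx m (x1 : 'rV[R]_n) (x2 : 'rV[R]_m) :
  (row_mx x1 x2 *m (row_mx x1 x2)^T) 0 0 = (x1 *m x1^T) 0 0 + (x2 *m x2^T) 0 0.
Proof. by rewrite tr_row_mx mul_row_col mxE. Qed.

Lemma dot_ones :
  ((const_mx 1 : 'rV[R]_n) *m (const_mx 1 : 'rV[R]_n)^T) 0 0 = n%:R.
Proof.
rewrite mxE (eq_bigr (fun _ => 1)) => [|i _]; last by rewrite !mxE mulr1.
by rewrite sumr_const card_ord.
Qed.

End DotProduct.

Section Rayleigh.
Variables (R : realType) (n : nat) (A : 'M[R]_n).
Hypothesis symA : A^T = A.
Local Notation toC := (real_complex R).
Local Notation ones := (const_mx 1 : 'rV[R]_n).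

Lemma symmx_spectrum :
  exists (P : 'M[R[i]]_n) (r : 'rV[R]_n),
   [/\ P^t* *m P = 1%:M,
       map_mx toC A = P^t* *m diag_mx (map_mx toC r) *m P,
       is_spectrum A (spectrum A) &
       perm_eq (spectrum A) [seq r 0 i | i <- index_enum 'I_n]].
Proof.
have [P [r [PP EA charA]]] := symmx_spectral symA.
have [specA perm_r] : is_spectrum A (spectrum A) /\
    perm_eq (spectrum A) [seq r 0 i | i <- index_enum 'I_n].
  by apply: spectrum_split; rewrite big_map charA.
by exists P, r.
Qed.

Lemma size_spectrum : size (spectrum A) = n.
Proof.
have [_ [r [_ _ _ perm_r]]] := symmx_spectrum.
by rewrite (perm_size perm_r) size_map /index_enum unlock -enumT size_enum_ord.
Qed.

Lemma eig_max_eigenvector : (0 < n)%N ->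
  exists2 v : 'rV[R]_n, v *m A = eig A n *: v & v != 0.
Proof.
move=> n_gt0; have [_ [_ [_ _ [_ charA] _]]] := symmx_spectrum.
apply/eigenvalueP; rewrite eigenvalue_root_char charA root_prod_XsubC /eig.
by apply: mem_nth; rewrite size_spectrum prednK.
Qed.

Lemma rayleigh_le_eig_max (x : 'rV[R]_n) :
  (x *m A *m x^T) 0 0 <= eig A n * (x *m x^T) 0 0.
Proof.
have [P [r [PP EA [sortedA _] perm_r]]] := symmx_spectrum.
rewrite -lecR rmorphM /= realC_form realC_dot EA cform_diag (cdot_unitary _ _ PP).
rewrite mulr_sumr; apply: ler_sum => i _.
rewrite mulrAC [toC _ * _]mulrC ler_wpM2l ?mul_conjC_ge0 // mxE lecR.
have /le_nth_last : r 0 i \in spectrum A.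
  by rewrite (perm_mem perm_r) map_f ?mem_index_enum.
by rewrite size_spectrum; apply.
Qed.

Lemma le_eig_max_rayleigh (x : 'rV[R]_n) q : x != 0 ->
  q * (x *m x^T) 0 0 <= (x *m A *m x^T) 0 0 -> q <= eig A n.
Proof.
move=> x_neq0 q_le; rewrite -(ler_pM2r (dot_gt0 x_neq0)).
exact: le_trans q_le (rayleigh_le_eig_max x).
Qed.

Lemma eig2_le_rayleigh (x : 'rV[R]_n) :
  A *m ones^T = 0 -> (forall z : 'rV[R]_n, 0 <= (z *m A *m z^T) 0 0) ->
  (x *m ones^T) 0 0 = 0 ->
  eig A 2 * (x *m x^T) 0 0 <= (x *m A *m x^T) 0 0.
Proof.
move=> A1 psdA x_perp1; set l := eig A 2.
have [l_le0|l_gt0] := leP l 0.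
  exact: le_trans (mulr_le0_ge0 l_le0 (dot_ge0 x)) (psdA x).
have [P [r [PP EA [sortedA _] perm_r]]] := symmx_spectrum.
set y := map_mx toC x *m P^t*; set z := map_mx toC ones *m P^t*.
have below_uniq i j : r 0 i < l -> r 0 j < l -> i = j.
  have := count_lt_nth1 sortedA.
  rewrite (permP perm_r) count_map -sum1_count sum1_card => /card_le1_eqP.
  by move=> le1 ri rj; apply: le1; [exact: rj | exact: ri].
have z_ker i : z 0 i * toC (r 0 i) = 0.
  have oA : map_mx toC ones *m map_mx toC A = 0.
    by rewrite -map_mxM -[ones *m A]trmxK trmx_mul symA A1 trmx0 map_mx0.
  have : z *m diag_mx (map_mx toC r) = 0.
    rewrite -[LHS]mulmx1 -(mulmx1C PP) /z !mulmxA -(mulmxA _ _ (diag_mx _)).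
    by rewrite -(mulmxA _ (_ *m _)) -EA oA !mul0mx.
  by move/matrixP/(_ 0 i); rewrite mul_mx_diag !mxE.
(* Every eigenvalue other than the one below l is positive, so ones has a
   single nonzero coordinate there; x _|_ ones then kills that coordinate of x. *)
have y_below i : r 0 i < l -> y 0 i = 0.
  move=> ri; have z_off j : j != i -> z 0 j = 0.
    move=> ji; have rj_gt0 : 0 < r 0 j.
      apply: lt_le_trans l_gt0 _; rewrite leNgt.
      by apply: contra ji => rj; apply/eqP/below_uniq.
    move/eqP: (z_ker j).
    by rewrite mulf_eq0 fmorph_eq0 (gt_eqF rj_gt0) orbF => /eqP.
  have dot_z (v : 'rV[R]_n) :
      toC ((v *m ones^T) 0 0) = (map_mx toC v *m P^t*) 0 i * (z 0 i)^*.
    rewrite realC_dot (cdot_unitary _ _ PP) (bigD1 i) //= big1 ?addr0 // => j ji.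
    by rewrite z_off // conjC0 mulr0.
  have zi_neq0 : z 0 i != 0.
    apply/eqP => zi0; have := dot_z ones; rewrite zi0 mul0r dot_ones => /eqP.
    by rewrite fmorph_eq0 pnatr_eq0 gtn_eqF // (leq_ltn_trans _ (ltn_ord i)).
  apply/eqP; have := dot_z x; rewrite x_perp1 rmorph0 => /esym/eqP.
  by rewrite mulf_eq0 conjC_eq0 (negbTE zi_neq0) orbF.
rewrite -lecR rmorphM /= realC_form realC_dot EA cform_diag (cdot_unitary _ _ PP).
rewrite mulr_sumr; apply: ler_sum => i _.
have [ri|li] := ltP (r 0 i) l; first by rewrite y_below // !(mul0r, mulr0).
by rewrite mulrAC [toC _ * _]mulrC ler_wpM2l ?mul_conjC_ge0 // mxE lecR.
Qed.

End Rayleigh.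

Section Laplacian.
Variables (R : realType) (N : nat) (e : rel 'I_N).
Local Notation L := (laplacian R e).
Local Notation ones := (const_mx 1 : 'rV[R]_N).

Lemma laplacian_diag_le i : L i i <= N%:R.
Proof.
by rewrite mxE eqxx ler_nat (leq_trans (max_card _)) ?card_ord.
Qed.

Lemma degree_sum i : (#|[set k | e i k]|)%:R = \sum_k (e i k)%:R :> R.
Proof.
rewrite -sum1_card natr_sum big_mkcond /=; apply: eq_bigr => k _.
by rewrite inE; case: (e i k).
Qed.

Hypothesis e_sym : forall i j, e i j = e j i.
Hypothesis e_irr : forall i, e i i = false.

Lemma laplacian_sym : L^T = L.
Proof. by apply/matrixP=> i j; rewrite !mxE eq_sym e_sym; case: eqP => // ->. Qed.

Lemma laplacian_mulones : L *m ones^T = 0.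
Proof.
apply/matrixP=> i j; rewrite !mxE; under eq_bigr do rewrite !mxE mulr1.
rewrite (bigD1 i) //= eqxx degree_sum (bigD1 i) //= e_irr add0r.
rewrite -big_split /= big1 // => k ki.
by rewrite eq_sym (negbTE ki); case: (e i k); rewrite ?subrr ?addr0.
Qed.

Lemma laplacian_form (x : 'rV[R]_N) : (x *m L *m x^T) 0 0 =
  \sum_i \sum_j (e i j)%:R * (x 0 i ^+ 2 - x 0 i * x 0 j).
Proof.
rewrite mxE; under eq_bigr do rewrite !mxE mulr_suml.
rewrite exchange_big /=; apply: eq_bigr => i _.
rewrite (bigD1 i) //= [RHS](bigD1 i) //= e_irr mul0r add0r !mxE eqxx degree_sum.
rewrite (bigD1 i) //= e_irr add0r mulr_sumr mulr_suml -big_split /=.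
apply: eq_bigr => j ji; rewrite !mxE eq_sym (negbTE ji).
by case: (e i j) => /=; ring.
Qed.

Lemma laplacian_psd (x : 'rV[R]_N) : 0 <= (x *m L *m x^T) 0 0.
Proof.
have twice : (x *m L *m x^T) 0 0 *+ 2 =
    \sum_i \sum_j (e i j)%:R * (x 0 i - x 0 j) ^+ 2.
  rewrite mulr2n {1}laplacian_form laplacian_form [X in _ + X]exchange_big.
  rewrite -big_split /=; apply: eq_bigr => i _; rewrite -big_split /=.
  by apply: eq_bigr => j _; rewrite (e_sym j i); ring.
rewrite -(pmulrn_lge0 _ (isT : (0 < 2)%N)) twice.
by do 2!apply: sumr_ge0 => ? _; rewrite mulr_ge0 ?ler0n ?sqr_ge0.
Qed.

End Laplacian.

Section Multiplex.
Variables (R : realType) (N : nat) (L1 L2 : 'M[R]_N) (w : 'rV[R]_N).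
Local Notation M := (multiplex_laplacian L1 L2 w).
Local Notation ones := (const_mx 1 : 'rV[R]_N).

Lemma diag_form (a b : 'rV[R]_N) :
  (a *m diag_mx w *m b^T) 0 0 = \sum_i a 0 i * w 0 i * b 0 i.
Proof. by rewrite mul_mx_diag mxE; apply: eq_bigr => i _; rewrite !mxE. Qed.

Lemma multiplex_form (x1 x2 : 'rV[R]_N) :
  (row_mx x1 x2 *m M *m (row_mx x1 x2)^T) 0 0 =
  (x1 *m L1 *m x1^T) 0 0 + (x2 *m L2 *m x2^T) 0 0 +
  \sum_i w 0 i * (x1 0 i - x2 0 i) ^+ 2.
Proof.
rewrite /multiplex_laplacian mul_row_block tr_row_mx mul_row_col.
rewrite !mulmxDr !mulmxDl !mulmxN !mulNmx !mxE.
have -> : \sum_i w 0 i * (x1 0 i - x2 0 i) ^+ 2 =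
    (x1 *m diag_mx w *m x1^T) 0 0 - (x2 *m diag_mx w *m x1^T) 0 0
    - (x1 *m diag_mx w *m x2^T) 0 0 + (x2 *m diag_mx w *m x2^T) 0 0.
  rewrite !diag_form -!sumrB -big_split /=; apply: eq_bigr => i _; ring.
rewrite !mxE; ring.
Qed.

Lemma multiplex_sym : L1^T = L1 -> L2^T = L2 -> M^T = M.
Proof.
move=> sym1 sym2; rewrite /multiplex_laplacian tr_block_mx.
by rewrite !linearD !linearN /= tr_diag_mx sym1 sym2.
Qed.

Lemma multiplex_mulones : L1 *m ones^T = 0 -> L2 *m ones^T = 0 ->
  M *m (const_mx 1 : 'rV[R]_(N + N))^T = 0.
Proof.
move=> ones1 ones2; rewrite /multiplex_laplacian -row_mx_const tr_row_mx.
rewrite mul_block_col !mulmxDl !mulNmx ones1 ones2 !add0r subrr.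
by rewrite addrC subrr col_mx0.
Qed.

Lemma multiplex_psd :
  (forall x : 'rV[R]_N, 0 <= (x *m L1 *m x^T) 0 0) ->
  (forall x : 'rV[R]_N, 0 <= (x *m L2 *m x^T) 0 0) ->
  (forall i, 0 <= w 0 i) ->
  forall z : 'rV[R]_(N + N), 0 <= (z *m M *m z^T) 0 0.
Proof.
move=> psd1 psd2 w_ge0 z; rewrite -(hsubmxK z) multiplex_form.
by rewrite !addr_ge0 // sumr_ge0 // => i _; rewrite mulr_ge0 ?sqr_ge0.
Qed.

End Multiplex.

Section Bump.
Variables (R : realType) (N : nat) (j : 'I_N) (t : R).
Local Notation ones := (const_mx 1 : 'rV[R]_N).
Local Notation bump := (ones + t *: delta_mx 0 j).

Lemma weighted_sq_bump (f : 'I_N -> R) :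
  \sum_i f i * bump 0 i ^+ 2 = \sum_i f i + f j * (2 * t + t ^+ 2).
Proof.
have off_j : \sum_(i | i != j) f i * bump 0 i ^+ 2 = \sum_(i | i != j) f i.
  apply: eq_bigr => i ij.
  by rewrite !mxE eqxx (negbTE ij) mulr0 addr0 expr1n mulr1.
rewrite (bigD1 j) // [in RHS](bigD1 j) //= off_j !mxE !eqxx mulr1; ring.
Qed.

Lemma dot_bump : (bump *m bump^T) 0 0 = N%:R + (2 * t + t ^+ 2).
Proof.
have := weighted_sq_bump (fun _ => 1); rewrite sumr_const card_ord mul1r => <-.
by rewrite mxE; apply: eq_bigr => i _; rewrite [_^T _ _]mxE mul1r expr2.
Qed.

Lemma form_bump (L : 'M[R]_N) : L^T = L -> L *m ones^T = 0 ->
  (bump *m L *m bump^T) 0 0 = t ^+ 2 * L j j.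
Proof.
move=> symL onesL; have onesL' : ones *m L = 0.
  by rewrite -[ones *m L]trmxK trmx_mul symL onesL trmx0.
rewrite mulmxDl -scalemxAl onesL' add0r linearD linearZ /= mulmxDr -scalemxAr.
rewrite -scalemxAl -mulmxA onesL mulmx0 scaler0 add0r -scalemxAl.
by rewrite -rowE trmx_delta -colE !mxE expr2 mulrA.
Qed.

End Bump.

Section MultiplexSpectrum.
Variables (R : realType) (N : nat) (L1 L2 : 'M[R]_N) (w : 'rV[R]_N).
Local Notation M := (multiplex_laplacian L1 L2 w).
Local Notation ones := (const_mx 1 : 'rV[R]_N).
Hypotheses (sym1 : L1^T = L1) (sym2 : L2^T = L2).
Hypotheses (ones1 : L1 *m ones^T = 0) (ones2 : L2 *m ones^T = 0).
Hypothesis psd1 : forall x : 'rV[R]_N, 0 <= (x *m L1 *m x^T) 0 0.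
Hypothesis psd2 : forall x : 'rV[R]_N, 0 <= (x *m L2 *m x^T) 0 0.
Hypothesis w_ge0 : forall i, 0 <= w 0 i.

Lemma weighted_sq_ge kappa (v : 'rV[R]_N) : (forall i, kappa <= w 0 i) ->
  kappa * (v *m v^T) 0 0 <= \sum_i w 0 i * v 0 i ^+ 2.
Proof.
move=> kappa_le; rewrite mxE mulr_sumr; apply: ler_sum => i _.
by rewrite mxE -expr2 ler_wpM2r ?sqr_ge0.
Qed.

Lemma eig_max_multiplex_ge kappa : (0 < N)%N -> (forall i, kappa <= w 0 i) ->
  Num.max (eig_max L1) (eig_max L2) + kappa <= eig M (N + N).
Proof.
move=> N_gt0 kappa_le; have symM := multiplex_sym w sym1 sym2.
rewrite -lerBrDr ge_max !lerBrDr; apply/andP; split.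
- have [v Lv v_neq0] := eig_max_eigenvector sym1 N_gt0.
  apply: (le_eig_max_rayleigh symM (x := row_mx v 0)).
    by rewrite row_mx_eq0 negb_and v_neq0.
  have vLv : (v *m L1 *m v^T) 0 0 = eig L1 N * (v *m v^T) 0 0.
    by rewrite Lv -scalemxAl mxE.
  rewrite multiplex_form dot_row_mx vLv !mul0mx.
  set V := (v *m v^T) 0 0; rewrite !mxE.
  under eq_bigr do rewrite [X in _ - X]mxE subr0.
  by have := weighted_sq_ge v kappa_le; rewrite -/V /eig_max; lra.
- have [v Lv v_neq0] := eig_max_eigenvector sym2 N_gt0.
  apply: (le_eig_max_rayleigh symM (x := row_mx 0 v)).
    by rewrite row_mx_eq0 negb_and v_neq0 orbT.
  have vLv : (v *m L2 *m v^T) 0 0 = eig L2 N * (v *m v^T) 0 0.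
    by rewrite Lv -scalemxAl mxE.
  rewrite multiplex_form dot_row_mx vLv !mul0mx.
  set V := (v *m v^T) 0 0; rewrite !mxE.
  under eq_bigr do rewrite [X in X - _]mxE sub0r sqrrN.
  by have := weighted_sq_ge v kappa_le; rewrite -/V /eig_max; lra.
Qed.

Lemma eig2_multiplex_le (u : 'rV[R]_N) :
  eig M 2 * (2 * (u *m u^T) 0 0) <=
  (u *m L1 *m u^T) 0 0 + (u *m L2 *m u^T) 0 0 + 4 * \sum_i w 0 i * u 0 i ^+ 2.
Proof.
have perp : (row_mx u (- u) *m (const_mx 1 : 'rV[R]_(N + N))^T) 0 0 = 0.
  by rewrite -row_mx_const tr_row_mx mul_row_col mulNmx addrN mxE.
have := eig2_le_rayleigh (multiplex_sym w sym1 sym2)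
  (multiplex_mulones w ones1 ones2) (multiplex_psd psd1 psd2 w_ge0) perp.
rewrite multiplex_form dot_row_mx !(mulNmx, mulmxN, linearN) /= !opprK.
have -> : \sum_i w 0 i * (u 0 i - (- u) 0 i) ^+ 2 = 4 * \sum_i w 0 i * u 0 i ^+ 2.
  by rewrite mulr_sumr; apply: eq_bigr => i _; rewrite mxE; ring.
by move=> le2; rewrite mulr_natl mulr2n; exact: le2.
Qed.

End MultiplexSpectrum.

Definition multiplex_gap (R : realType) (N : nat) (c : R) : R :=
  let a := c / N%:R in let t := a / N%:R in
  Num.min (a / 2) (a * t / (N%:R + (2 * t + t ^+ 2))).

Section Gap.
Variables (R : realType) (N : nat) (L1 L2 : 'M[R]_N) (w : 'rV[R]_N) (c : R).
Local Notation M := (multiplex_laplacian L1 L2 w).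
Local Notation ones := (const_mx 1 : 'rV[R]_N).
Hypotheses (sym1 : L1^T = L1) (sym2 : L2^T = L2).
Hypotheses (ones1 : L1 *m ones^T = 0) (ones2 : L2 *m ones^T = 0).
Hypothesis psd1 : forall x : 'rV[R]_N, 0 <= (x *m L1 *m x^T) 0 0.
Hypothesis psd2 : forall x : 'rV[R]_N, 0 <= (x *m L2 *m x^T) 0 0.
Hypotheses (diag1 : forall i, L1 i i <= N%:R) (diag2 : forall i, L2 i i <= N%:R).
Hypothesis w_ge0 : forall i, 0 <= w 0 i.
Hypothesis w_sum : \sum_i w 0 i = c.
Hypothesis N_gt0 : (0 < N)%N.

Let a := c / N%:R.
Let t := a / N%:R.
Let K := N%:R + (2 * t + t ^+ 2).

Let N_pos : 0 < N%:R :> R. Proof. by rewrite ltr0n. Qed.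
Let c_ge0 : 0 <= c. Proof. by rewrite -w_sum sumr_ge0. Qed.
Let aN : a * N%:R = c. Proof. by rewrite divfK ?gt_eqF. Qed.
Let tN : t * N%:R = a. Proof. by rewrite divfK ?gt_eqF. Qed.
Let a_ge0 : 0 <= a. Proof. by rewrite divr_ge0 ?ler0n. Qed.
Let t_ge0 : 0 <= t. Proof. by rewrite divr_ge0 ?ler0n. Qed.

Lemma eig2_multiplex_le_mean : eig M 2 <= 2 * a.
Proof.
have := eig2_multiplex_le sym1 sym2 ones1 ones2 psd1 psd2 w_ge0 ones.
have quad0 (L : 'M[R]_N) : L *m ones^T = 0 -> (ones *m L *m ones^T) 0 0 = 0.
  by move=> onesL; rewrite -mulmxA onesL mulmx0 mxE.
rewrite quad0 // quad0 // dot_ones.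
under eq_bigr do rewrite mxE expr1n mulr1.
rewrite w_sum -aN !add0r => le_mean.
by rewrite -(ler_pM2r N_pos); lra.
Qed.

Lemma eig2_multiplex_le_bump j :
  w 0 j <= a / 2 -> eig M 2 <= 2 * a - a * t / K.
Proof.
move=> wj_le.
have := eig2_multiplex_le sym1 sym2 ones1 ones2 psd1 psd2 w_ge0
  (ones + t *: delta_mx 0 j).
rewrite dot_bump (form_bump _ _ sym1 ones1) (form_bump _ _ sym2 ones2).
rewrite weighted_sq_bump w_sum -/K => le_bump.
have K_gt0 : 0 < K by rewrite /K; move: (sqr_ge0 t) N_pos t_ge0; lra.
rewrite -(ler_pM2r K_gt0) mulrBl divfK ?gt_eqF //.
have h1 : t ^+ 2 * L1 j j <= t ^+ 2 * N%:R by rewrite ler_wpM2l ?sqr_ge0 ?diag1.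
have h2 : t ^+ 2 * L2 j j <= t ^+ 2 * N%:R by rewrite ler_wpM2l ?sqr_ge0 ?diag2.
have h3 : w 0 j * (2 * t + t ^+ 2) <= a / 2 * (2 * t + t ^+ 2).
  by rewrite ler_wpM2r //; move: (sqr_ge0 t) t_ge0; lra.
have h4 : t ^+ 2 * N%:R = a * t by rewrite expr2 -mulrA tN mulrC.
have h5 : 0 <= a * t ^+ 2 by rewrite mulr_ge0 ?sqr_ge0.
move: le_bump; rewrite /K -aN; nra.
Qed.

Lemma multiplex_gap_le :
  Num.max (eig_max L1) (eig_max L2) - 2 * a + multiplex_gap N c <=
  eig M (N + N) - eig M 2.
Proof.
rewrite /multiplex_gap -/a -/t -/K.
have eig_max_ge := eig_max_multiplex_ge (w := w) sym1 sym2 N_gt0.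
have [[j wj_lt]|no_small] := pselect (exists j, w 0 j < a / 2).
  have := eig_max_ge _ w_ge0.
  have := eig2_multiplex_le_bump (ltW wj_lt).
  have : Num.min (a / 2) (a * t / K) <= a * t / K by rewrite ge_min lexx orbT.
  lra.
have w_ge i : a / 2 <= w 0 i.
  by rewrite leNgt; apply/negP => wi_lt; apply: no_small; exists i.
have := eig_max_ge _ w_ge; have := eig2_multiplex_le_mean.
have : Num.min (a / 2) (a * t / K) <= a / 2 by rewrite ge_min lexx.
lra.
Qed.

End Gap.

Lemma multiplex_gap_ge0 (R : realType) (N : nat) (c : R) :
  0 <= c -> 0 <= multiplex_gap N c.
Proof.
move=> c_ge0; rewrite /multiplex_gap /=.
set a := c / N%:R; set t := a / N%:R.
have a_ge0 : 0 <= a by rewrite divr_ge0 ?ler0n.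
have t_ge0 : 0 <= t by rewrite divr_ge0 ?ler0n.
have K_ge0 : 0 <= N%:R + (2 * t + t ^+ 2) by move: (sqr_ge0 t) (ler0n R N); lra.
by rewrite le_min; apply/andP; split; apply: divr_ge0 => //; apply: mulr_ge0.
Qed.

Lemma multiplex_gap_gt0 (R : realType) (N : nat) (c : R) :
  (0 < N)%N -> 0 < c -> 0 < multiplex_gap N c.
Proof.
move=> N_gt0 c_gt0; rewrite /multiplex_gap /=.
set a := c / N%:R; set t := a / N%:R.
have N_pos : 0 < N%:R :> R by rewrite ltr0n.
have a_gt0 : 0 < a by rewrite divr_gt0.
have t_gt0 : 0 < t by rewrite divr_gt0.
have K_gt0 : 0 < N%:R + (2 * t + t ^+ 2) by move: (sqr_ge0 t); lra.
by rewrite lt_min; apply/andP; split; apply: divr_gt0 => //; apply: mulr_gt0.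
Qed.

Theorem lemma1 (R : realType) (N : nat) (e1 e2 : rel 'I_N) :
  (0 < N)%N -> simple_graph e1 -> simple_graph e2 ->
  let L1 := laplacian R e1 in
  let L2 := laplacian R e2 in
  let lamN1 := Num.max (eig_max L1) (eig_max L2) in
  forall c : R, 0 <= c ->
    lamN1 - 2 * c / N%:R <= Hmin L1 L2 c /\
    (c != 0 -> lamN1 - 2 * c / N%:R < Hmin L1 L2 c).
Proof.
move=> N_gt0 [sym1 irr1] [sym2 irr2] L1 L2 lamN1 c c_ge0.
have Hmin_ge : lamN1 - 2 * c / N%:R + multiplex_gap N c <= Hmin L1 L2 c.
  apply: lb_le_inf.
    eexists; exists (const_mx (c / N%:R)) => //.
    split=> [i|]; rewrite ?mxE ?divr_ge0 //.
    under eq_bigr do rewrite mxE.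
    rewrite sumr_const card_ord -[_ *+ N]mulr_natr.
    by rewrite divfK ?pnatr_eq0 ?gtn_eqF.
  move=> _ [w [w_ge0 w_sum] <-]; rewrite -mulrA.
  apply: multiplex_gap_le w_sum N_gt0 => //;
    by [apply: laplacian_sym | apply: laplacian_mulones |
        apply: laplacian_psd | apply: laplacian_diag_le].
split=> [|c_neq0]; first by move: (multiplex_gap_ge0 N c_ge0) Hmin_ge; lra.
have c_gt0 : 0 < c by rewrite lt_def c_neq0.
by move: (multiplex_gap_gt0 N_gt0 c_gt0) Hmin_ge; lra.
Qed.
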